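(* Fix $\lambda_1,\lambda_2,\lambda_3\in\mathbb{Z}_{\ge0}$ and a $0$-initial triple $(a,b,c)\in\mathbb{R}_+^3$. Let $\mathbf{w}=[w_1,w_2,\dots]$ be an infinite reduced sequence; for $n\ge1$ let $(a_n,b_n,c_n)=\mu_{w_n}\circ\cdots\circ\mu_{w_1}(1,1,1)$ (generalized Markov chain) and $(x_n,y_n,z_n)=\mathcal{M}_{w_n}\circ\cdots\circ\mathcal{M}_{w_1}(a,b,c)$ (classical Euclid chain). (1) If each of $1,2,3$ appears infinitely many times in $\mathbf{w}$, there exists a real number $q$ with $\lim_{n\to\infty}\frac{\log a_n}{x_n}=\lim_{n\to\infty}\frac{\log b_n}{y_n}=\lim_{n\to\infty}\frac{\log c_n}{z_n}=q$. (2) If some index $i\in\{1,2,3\}$ appears only finitely many times in $\mathbf{w}$, there exists a real number $q$ such that for both $j\in\{1,2,3\}\setminus\{i\}$, the logarithm of the $j$-th component of $(a_n,b_n,c_n)$ divided by the $j$-th component of $(x_n,y_n,z_n)$ converges to $q$ as $n\to\infty$.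
   Context: Generalized Markov mutations: $\mu_1(x_1,x_2,x_3)=(\frac{x_2^2+\lambda_1x_2x_3+x_3^2}{x_1},x_2,x_3)$, $\mu_2(x_1,x_2,x_3)=(x_1,\frac{x_1^2+\lambda_2x_1x_3+x_3^2}{x_2},x_3)$, $\mu_3(x_1,x_2,x_3)=(x_1,x_2,\frac{x_1^2+\lambda_3x_1x_2+x_2^2}{x_3})$ (these generate all positive integer solutions of $X_1^2+X_2^2+X_3^2+\lambda_3X_1X_2+\lambda_1X_2X_3+\lambda_2X_3X_1=(3+\lambda_1+\lambda_2+\lambda_3)X_1X_2X_3$ from $(1,1,1)$). Classical Euclid mutations on $\mathbb{R}_+^3$: $\mathcal{M}_1(x,y,z)=(y+z,y,z)$, $\mathcal{M}_2(x,y,z)=(x,x+z,z)$, $\mathcal{M}_3(x,y,z)=(x,y,x+y)$. A $0$-initial triple is $(a,b,c)\in\mathbb{R}_+^3$ with $a\ne b+c$, $b\ne a+c$, $c\ne a+b$. A sequence with entries in $\{1,2,3\}$ is reduced if consecutive entries differ. $\log$ is the natural logarithm. *)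

From Stdlib Require Import Reals Lra Lia.
Open Scope R_scope.

Definition triple := (R * R * R)%type.

Definition tcomp (j : nat) (t : triple) : R :=
  let '(x1, x2, x3) := t in
  match j with 1%nat => x1 | 2%nat => x2 | _ => x3 end.

Definition gmu (l1 l2 l3 : nat) (i : nat) (t : triple) : triple :=
  let '(x1, x2, x3) := t in
  match i with
  | 1%nat => ((x2^2 + INR l1 * x2 * x3 + x3^2) / x1, x2, x3)
  | 2%nat => (x1, (x1^2 + INR l2 * x1 * x3 + x3^2) / x2, x3)
  | 3%nat => (x1, x2, (x1^2 + INR l3 * x1 * x2 + x2^2) / x3)
  | _ => t
  end.

Definition euclid (i : nat) (t : triple) : triple :=
  let '(x, y, z) := t in
  match i with
  | 1%nat => (y + z, y, z)
  | 2%nat => (x, x + z, z)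
  | 3%nat => (x, y, x + y)
  | _ => t
  end.

(* The infinite sequence w = [w_1, w_2, ...] is encoded as w : nat -> nat
   with w k = w_{k+1}.  markov_chain n = mu_{w_n} o ... o mu_{w_1} (1,1,1). *)
Fixpoint markov_chain (l1 l2 l3 : nat) (w : nat -> nat) (n : nat) : triple :=
  match n with
  | O => (1, 1, 1)
  | S m => gmu l1 l2 l3 (w m) (markov_chain l1 l2 l3 w m)
  end.

Fixpoint euclid_chain (w : nat -> nat) (t0 : triple) (n : nat) : triple :=
  match n with
  | O => t0
  | S m => euclid (w m) (euclid_chain w t0 m)
  end.

Definition reduced_seq (w : nat -> nat) : Prop :=
  (forall k, (1 <= w k <= 3)%nat) /\ (forall k, w k <> w (S k)).

Definition zero_initial (a b c : R) : Prop :=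
  0 < a /\ 0 < b /\ 0 < c /\ a <> b + c /\ b <> a + c /\ c <> a + b.

Definition appears_infinitely (w : nat -> nat) (i : nat) : Prop :=
  forall N, exists k, (N <= k)%nat /\ w k = i.

From Stdlib Require Import Reals Lra Lia Classical.
From Coquelicot Require Import Coquelicot.
Open Scope R_scope.

(* Along a reduced word the entry mutated last dominates the product of the other two, so
   by Vieta a Markov mutation sends x_j to y with K x_a x_c / (1 + Lam/m) <= y <= K x_a x_c,
   where K = 3 + l1 + l2 + l3, Lam = l1 + l2 + l3 + 1 and m bounds all entries from below.
   Hence the triple of ln (K x_p) follows the Euclid chain up to an error Lam/m per step.

   Two Euclid chains X, U driven by the same reduced word keep |X_p U_q - X_q U_p| constant,
   while the entries of U grow at least linearly; since each new ratio X_p/U_p is a mediant of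
   the old ones, the three ratios are squeezed to a common limit.

   (1) If every index recurs, all Markov entries tend to infinity; comparing with the Euclid
   chain started at the logarithms of a late Markov triple makes the errors negligible.
   (2) If index i eventually disappears, the word alternates between the two other indices and
   x_i freezes at some c; the newest Markov entries satisfy
   P_{m+2} P_m = P_{m+1}^2 + l P_{m+1} c + c^2, so ln P_{m+1} - ln P_m increases to a limit
   and ln P_n grows linearly, as do the Euclid entries. *)

Ltac idx_cases j := destruct j as [|[|[|[|j]]]]; try lia.

Lemma ln_1_plus_le x : 0 <= x -> ln (1 + x) <= x.
Proof.
  intros Hx. rewrite <- (ln_exp x) at 2. apply ln_le; [lra | apply exp_ineq1_le].
Qed.

Lemma mediant_between (lo hi x y u v : R) : 0 < u -> 0 < v ->
  lo <= x / u <= hi -> lo <= y / v <= hi -> lo <= (x + y) / (u + v) <= hi.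
Proof.
  intros Hu Hv Hx Hy.
  assert (Ex : x = x / u * u) by (field; lra).
  assert (Ey : y = y / v * v) by (field; lra).
  split.
  - apply Rmult_le_reg_r with (u + v); [lra|].
    replace ((x + y) / (u + v) * (u + v)) with (x + y) by (field; lra). nra.
  - apply Rmult_le_reg_r with (u + v); [lra|].
    replace ((x + y) / (u + v) * (u + v)) with (x + y) by (field; lra). nra.
Qed.

Lemma lim_const_div_INR (C : R) : is_lim_seq (fun n => C / INR n) 0.
Proof.
  eapply is_lim_seq_div; [apply is_lim_seq_const | apply is_lim_seq_INR | discriminate |].
  apply is_Rbar_div_p_infty.
Qed.

Lemma nested_lim (lo hi : nat -> R) :
  (forall n, lo n <= lo (S n)) -> (forall n, hi (S n) <= hi n) -> (forall n, lo n <= hi n) ->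
  is_lim_seq (fun n => hi n - lo n) 0 ->
  exists l : R, is_lim_seq lo l /\ is_lim_seq hi l.
Proof.
  intros Hlo Hhi Hle Hgap.
  assert (Hhi0 : forall n, hi n <= hi 0%nat).
  { induction n; [lra|]. specialize (Hhi n). lra. }
  assert (Hbound : forall n, lo n <= hi 0%nat).
  { intros n. specialize (Hle n). specialize (Hhi0 n). lra. }
  destruct (ex_finite_lim_seq_incr lo (hi 0%nat) Hlo Hbound) as [l Hl].
  exists l. split; [exact Hl|].
  apply is_lim_seq_ext with (u := fun n => lo n + (hi n - lo n)); [intros n; ring|].
  replace l with (l + 0) by ring. apply is_lim_seq_plus'; assumption.
Qed.

Lemma cesaro_telescope (g : nat -> R) (delta : R) :
  is_lim_seq (fun k => g (S k) - g k) delta -> is_lim_seq (fun n => g n / INR n) delta.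
Proof.
  intros Hd. apply is_lim_seq_Reals, Cesaro_1, is_lim_seq_Reals in Hd.
  assert (Htel : forall k, sum_f_R0 (fun k => g (S k) - g k) k = g (S k) - g 0%nat).
  { induction k as [|k IHk]; simpl; [|rewrite IHk]; ring. }
  replace delta with (delta + 0) by ring.
  apply is_lim_seq_ext_loc with
    (u := fun n => sum_f_R0 (fun k => g (S k) - g k) (Init.Nat.pred n) / INR n + g 0%nat / INR n).
  - exists 1%nat. intros n Hn. destruct n as [|n]; [lia|]. simpl Init.Nat.pred. rewrite Htel.
    field. apply not_0_INR. lia.
  - apply is_lim_seq_plus'; [exact Hd | apply lim_const_div_INR].
Qed.

Lemma log_second_difference_bound (p0 p1 p2 C : R) : 1 <= p0 -> 1 <= p1 -> 0 <= C ->
  p1 ^ 2 <= p2 * p0 <= p1 * (p1 + C) ->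
  0 <= (ln p2 - ln p1) - (ln p1 - ln p0) <= C / p1.
Proof.
  intros Hp0 Hp1 HC [Hlo Hhi].
  assert (Hp2 : 0 < p2) by nra.
  set (r := p2 * p0 / (p1 * p1)).
  assert (Hr : ln p2 - ln p1 - (ln p1 - ln p0) = ln r).
  { unfold r. rewrite ln_div, !ln_mult by (try apply Rmult_lt_0_compat; lra). ring. }
  assert (Hr1 : 1 <= r).
  { unfold r. apply Rmult_le_reg_r with (p1 * p1); [nra|].
    replace (p2 * p0 / (p1 * p1) * (p1 * p1)) with (p2 * p0) by (field; lra). lra. }
  assert (Hr2 : r <= 1 + C / p1).
  { unfold r. apply Rmult_le_reg_r with (p1 * p1); [nra|].
    replace (p2 * p0 / (p1 * p1) * (p1 * p1)) with (p2 * p0) by (field; lra).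
    replace ((1 + C / p1) * (p1 * p1)) with (p1 * (p1 + C)) by (field; lra). lra. }
  assert (HCp : 0 <= C / p1) by (apply Rmult_le_pos; [lra | left; apply Rinv_0_lt_compat; lra]).
  rewrite Hr. split.
  - rewrite <- ln_1. apply ln_le; lra.
  - apply Rle_trans with (ln (1 + C / p1)); [apply ln_le; lra | apply ln_1_plus_le, HCp].
Qed.

Lemma log_growth_lim (P : nat -> R) (C : R) :
  (forall m, 1 <= P m) -> (forall m, 2 * P m <= P (S m)) -> 0 <= C ->
  (forall m, P (S m) ^ 2 <= P (S (S m)) * P m <= P (S m) * (P (S m) + C)) ->
  exists delta : R, is_lim_seq (fun n => ln (P n) / INR n) delta.
Proof.
  intros HP1 HP2 HC Hrec.
  set (d := fun k => ln (P (S k)) - ln (P k)).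
  assert (Hpow : forall k, 2 ^ k <= P k).
  { induction k as [|k IHk]; simpl; [apply HP1|]. specialize (HP2 k). lra. }
  assert (Hstep : forall k, d k <= d (S k) <= d k + C / 2 ^ (S k)).
  { intros k. unfold d.
    pose proof (log_second_difference_bound (P k) (P (S k)) (P (S (S k))) C
                  (HP1 k) (HP1 (S k)) HC (Hrec k)).
    assert (C / P (S k) <= C / 2 ^ S k).
    { apply Rmult_le_compat_l; [exact HC|].
      apply Rinv_le_contravar; [apply pow_lt; lra | apply Hpow]. }
    lra. }
  assert (Hbound : forall k, d k <= d 0%nat + C - C / 2 ^ k).
  { induction k as [|k IHk]; [simpl; lra|].
    pose proof (Hstep k).
    assert (C / 2 ^ k = 2 * (C / 2 ^ S k)) by (simpl; field; apply pow_nonzero; lra). lra. }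
  destruct (ex_finite_lim_seq_incr d (d 0%nat + C)) as [delta Hdelta].
  - intros k. apply Hstep.
  - intros k. pose proof (Hbound k).
    assert (0 <= C / 2 ^ k) by (apply Rmult_le_pos; [lra | left; apply Rinv_0_lt_compat, pow_lt; lra]).
    lra.
  - exists delta. apply (cesaro_telescope (fun n => ln (P n))), Hdelta.
Qed.

Lemma eventually_shift (P : nat -> Prop) k :
  eventually (fun m => P (k + m)%nat) <-> eventually P.
Proof.
  split; intros [N HN].
  - exists (k + N)%nat. intros n Hn. replace n with (k + (n - k))%nat by lia. apply HN. lia.
  - exists N. intros m Hm. apply HN. lia.
Qed.

Lemma eventually_forall3 (P : nat -> nat -> Prop) :
  (forall p, (1 <= p <= 3)%nat -> eventually (P p)) ->
  eventually (fun n => forall p, (1 <= p <= 3)%nat -> P p n).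
Proof.
  intros H.
  apply (filter_imp (fun n => P 1%nat n /\ P 2%nat n /\ P 3%nat n)).
  - intros n (H1 & H2 & H3) p Hp. idx_cases p; assumption.
  - repeat apply filter_and; apply H; lia.
Qed.

Lemma common_lim_of_approx (f : nat -> nat -> R) :
  (forall eps, 0 < eps -> exists Q,
     eventually (fun n => forall p, (1 <= p <= 3)%nat -> Rabs (f p n - Q) <= eps)) ->
  exists q : R, forall p, (1 <= p <= 3)%nat -> is_lim_seq (f p) q.
Proof.
  intros H.
  assert (Hc : ex_lim_seq_cauchy (f 1%nat)).
  { intros eps. destruct (H (eps / 3)) as (Q & N & HN); [pose proof (cond_pos eps); lra|].
    exists N. intros n m Hn Hm.
    pose proof (HN n Hn 1%nat ltac:(lia)). pose proof (HN m Hm 1%nat ltac:(lia)).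
    pose proof (cond_pos eps).
    replace (f 1%nat n - f 1%nat m) with ((f 1%nat n - Q) - (f 1%nat m - Q)) by ring.
    eapply Rle_lt_trans; [apply Rabs_triang|]. rewrite Rabs_Ropp. lra. }
  apply ex_lim_seq_cauchy_corr in Hc. destruct Hc as [q Hq].
  exists q. intros p Hp. apply is_lim_seq_spec. intros eps.
  pose proof (cond_pos eps) as Heps.
  destruct (H (eps / 4)) as (Q & N & HN); [lra|].
  destruct (proj2 (is_lim_seq_spec _ _) Hq (mkposreal (eps / 4) ltac:(lra))) as [N' HN'].
  exists (N + N')%nat. intros n Hn. simpl in HN'.
  pose proof (HN n ltac:(lia) p Hp). pose proof (HN n ltac:(lia) 1%nat ltac:(lia)).
  pose proof (HN' n ltac:(lia)).
  replace (f p n - q) with ((f p n - Q) - (f 1%nat n - Q) + (f 1%nat n - q)) by ring.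
  eapply Rle_lt_trans; [apply Rabs_triang|].
  eapply Rle_lt_trans; [apply Rplus_le_compat_r, Rabs_triang|]. rewrite Rabs_Ropp. lra.
Qed.

Lemma lim_of_lagged (g v : nat -> R) (L : R) : is_lim_seq g L ->
  eventually (fun n => v n = g (n - 1)%nat \/ v n = g (n - 2)%nat) -> is_lim_seq v L.
Proof.
  intros Hg [N0 HN0]. apply is_lim_seq_spec. intros eps.
  destruct (proj2 (is_lim_seq_spec g L) Hg eps) as [N HN].
  exists (N0 + N + 2)%nat. intros n Hn.
  destruct (HN0 n ltac:(lia)) as [E|E]; rewrite E; apply HN; lia.
Qed.

Lemma exists_ge1_quotient_le (A B e : R) : 0 <= A -> 0 < B -> 0 < e ->
  exists M, 1 <= M /\ A / M / B <= e.
Proof.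
  intros HA HB He. exists (Rmax 1 (A / (e * B))). split; [apply Rmax_l|].
  set (M := Rmax 1 (A / (e * B))).
  assert (HM1 : 1 <= M) by apply Rmax_l.
  assert (HAM : A <= e * B * M).
  { replace A with (e * B * (A / (e * B))) at 1 by (field; lra).
    apply Rmult_le_compat_l; [apply Rmult_le_pos; lra | apply Rmax_r]. }
  apply Rmult_le_reg_r with (M * B); [apply Rmult_lt_0_compat; lra|].
  replace (A / M / B * (M * B)) with A by (field; lra). lra.
Qed.

Lemma abs_ratio_perturb (X W L u Q e1 e2 e3 : R) : 0 < u -> Rabs (X / u - Q) <= e1 ->
  0 <= X - W <= e2 * u -> 0 <= L <= e3 * u -> Rabs ((W - L) / u - Q) <= e1 + e2 + e3.
Proof.
  intros Hu H1 H2 H3.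
  assert (D1 : 0 <= (X - W) / u <= e2).
  { split; [apply Rmult_le_pos; [lra | left; apply Rinv_0_lt_compat; lra]|].
    apply Rmult_le_reg_r with u; [lra|]. unfold Rdiv. rewrite Rmult_assoc, Rinv_l by lra. lra. }
  assert (D2 : 0 <= L / u <= e3).
  { split; [apply Rmult_le_pos; [lra | left; apply Rinv_0_lt_compat; lra]|].
    apply Rmult_le_reg_r with u; [lra|]. unfold Rdiv. rewrite Rmult_assoc, Rinv_l by lra. lra. }
  replace ((W - L) / u - Q) with ((X / u - Q) - (X - W) / u - L / u) by (field; lra).
  apply Rabs_le. apply Rabs_le_between' in H1. lra.
Qed.

Definition tsum (t : triple) : R := tcomp 1 t + tcomp 2 t + tcomp 3 t.

Definition oprod (j : nat) (t : triple) : R :=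
  let '(x1, x2, x3) := t in
  match j with 1%nat => x2 * x3 | 2%nat => x1 * x3 | _ => x1 * x2 end.

Definition distinct3 (j a c : nat) : Prop :=
  (1 <= j <= 3)%nat /\ (1 <= a <= 3)%nat /\ (1 <= c <= 3)%nat /\ j <> a /\ j <> c /\ a <> c.

Lemma distinct3_extend i j : (1 <= i <= 3)%nat -> (1 <= j <= 3)%nat -> i <> j ->
  exists c, distinct3 j i c.
Proof.
  intros Hi Hj Hij. exists (6 - i - j)%nat. unfold distinct3. lia.
Qed.

Lemma distinct3_exists j : (1 <= j <= 3)%nat -> exists a c, distinct3 j a c.
Proof.
  intros Hj. destruct (distinct3_extend (if Nat.eqb j 1 then 2 else 1) j) as [c Hc].
  - destruct (Nat.eqb_spec j 1); lia.
  - exact Hj.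
  - destruct (Nat.eqb_spec j 1); lia.
  - eauto.
Qed.

Lemma tsum_distinct j a c t : distinct3 j a c ->
  tsum t = tcomp j t + tcomp a t + tcomp c t.
Proof.
  intros (Hj & Ha & Hc & Hja & Hjc & Hac). destruct t as [[x1 x2] x3]. unfold tsum.
  idx_cases j; idx_cases a; idx_cases c; simpl; ring.
Qed.

Lemma oprod_distinct j a c t : distinct3 j a c -> oprod j t = tcomp a t * tcomp c t.
Proof.
  intros (Hj & Ha & Hc & Hja & Hjc & Hac). destruct t as [[x1 x2] x3].
  idx_cases j; idx_cases a; idx_cases c; simpl; ring.
Qed.

Definition min3 (f : nat -> R) : R := Rmin (f 1%nat) (Rmin (f 2%nat) (f 3%nat)).

Definition max3 (f : nat -> R) : R := Rmax (f 1%nat) (Rmax (f 2%nat) (f 3%nat)).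

Lemma min3_le_max3 f p : (1 <= p <= 3)%nat -> min3 f <= f p <= max3 f.
Proof.
  intros Hp. unfold min3, max3.
  idx_cases p; unfold Rmin, Rmax; repeat destruct Rle_dec; lra.
Qed.

Lemma min3_glb f m : (forall p, (1 <= p <= 3)%nat -> m <= f p) -> m <= min3 f.
Proof. intros H. unfold min3. repeat apply Rmin_glb; apply H; lia. Qed.

Lemma max3_lub f m : (forall p, (1 <= p <= 3)%nat -> f p <= m) -> max3 f <= m.
Proof. intros H. unfold max3. repeat apply Rmax_lub; apply H; lia. Qed.

Lemma max3_sub_min3 f B :
  (forall p q, (1 <= p <= 3)%nat -> (1 <= q <= 3)%nat -> f p - f q <= B) ->
  max3 f - min3 f <= B.
Proof.
  intros H. cut (forall p, (1 <= p <= 3)%nat -> f p <= min3 f + B).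
  { intros Hp. pose proof (max3_lub f (min3 f + B) Hp). lra. }
  intros p Hp. cut (f p - B <= min3 f); [lra|].
  apply min3_glb. intros q Hq. specialize (H p q Hp Hq). lra.
Qed.

Lemma pair_prod_ge i j p q t A m : (1 <= i <= 3)%nat -> (1 <= j <= 3)%nat -> i <> j ->
  (1 <= p <= 3)%nat -> (1 <= q <= 3)%nat -> p <> q -> 0 <= A -> 0 <= m ->
  A <= tcomp i t -> A <= tcomp j t -> (forall r, (1 <= r <= 3)%nat -> m <= tcomp r t) ->
  A * m <= tcomp p t * tcomp q t.
Proof.
  intros Hi Hj Hij Hp Hq Hpq HA Hm HAi HAj Hge.
  assert (HAr : forall r, r = i \/ r = j -> A <= tcomp r t) by (intros r [-> | ->]; assumption).
  assert (Hpq' : (p = i \/ p = j) \/ (q = i \/ q = j)) by lia.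
  destruct Hpq' as [Hpij | Hqij].
  - apply Rmult_le_compat; [exact HA | exact Hm | apply HAr, Hpij | apply Hge, Hq].
  - rewrite (Rmult_comm (tcomp p t)).
    apply Rmult_le_compat; [exact HA | exact Hm | apply HAr, Hqij | apply Hge, Hp].
Qed.

Lemma unbounded_of_newest_growth (w : nat -> nat) (T : nat -> triple) (c : R) : 0 < c ->
  (forall n p, (1 <= p <= 3)%nat -> tcomp p (T (S n)) <= tcomp p (T (S (S n)))) ->
  (forall n, INR (S n) * c <= tcomp (w n) (T (S n))) ->
  (forall i, (1 <= i <= 3)%nat -> appears_infinitely w i) ->
  forall M, eventually (fun n => forall p, (1 <= p <= 3)%nat -> M <= tcomp p (T n)).
Proof.
  intros Hc Hmono Hnew Happ M.
  destruct (proj2 (is_lim_seq_spec INR p_infty) is_lim_seq_INR (M / c)) as [N0 HN0].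
  assert (Hreach : forall p, (1 <= p <= 3)%nat -> exists k,
             forall n, (S k <= n)%nat -> M <= tcomp p (T n)).
  { intros p Hp. destruct (Happ p Hp N0) as (k & Hk & Hwk). exists k.
    intros n Hn. destruct n as [|n]; [lia|].
    assert (Hgrow : Un_growing (fun m => tcomp p (T (S m)))) by (intros m; apply Hmono, Hp).
    pose proof (growing_prop _ n k Hgrow ltac:(lia)) as Hkn.
    pose proof (Hnew k) as Hk'. rewrite Hwk, S_INR in Hk'.
    assert (HM : M <= INR k * c).
    { replace M with (M / c * c) by (field; lra).
      apply Rmult_le_compat_r; [lra|]. left. apply HN0, Hk. }
    lra. }
  destruct (Hreach 1%nat ltac:(lia)) as (k1 & H1).
  destruct (Hreach 2%nat ltac:(lia)) as (k2 & H2).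
  destruct (Hreach 3%nat ltac:(lia)) as (k3 & H3).
  exists (S k1 + S k2 + S k3)%nat. intros n Hn p Hp.
  idx_cases p; [apply H1 | apply H2 | apply H3]; lia.
Qed.

(** * Euclid chains *)

Lemma euclid_new i t : (1 <= i <= 3)%nat -> tcomp i (euclid i t) = tsum t - tcomp i t.
Proof. intros Hi. destruct t as [[x y] z]. unfold tsum. idx_cases i; simpl; ring. Qed.

Lemma euclid_other i p t : (1 <= p <= 3)%nat -> p <> i -> tcomp p (euclid i t) = tcomp p t.
Proof. intros Hp Hpi. destruct t as [[x y] z]. idx_cases p; idx_cases i; reflexivity. Qed.

Definition balanced (i : nat) (t : triple) : Prop := 2 * tcomp i t = tsum t.

Lemma euclid_balanced i t : (1 <= i <= 3)%nat -> balanced i (euclid i t).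
Proof. intros Hi. destruct t as [[x y] z]. unfold balanced, tsum. idx_cases i; simpl; ring. Qed.

Definition cross (p q : nat) (X U : triple) : R :=
  tcomp p X * tcomp q U - tcomp q X * tcomp p U.

Lemma cross_balanced i p q X U : (1 <= i <= 3)%nat -> (1 <= p <= 3)%nat -> (1 <= q <= 3)%nat ->
  p <> q -> balanced i X -> balanced i U -> Rabs (cross p q X U) = Rabs (cross 1 2 X U).
Proof.
  intros Hi Hp Hq Hpq HX HU. destruct X as [[x1 x2] x3], U as [[u1 u2] u3].
  unfold balanced, tsum, cross in *.
  idx_cases i; simpl in *;
  [ assert (x1 = x2 + x3) by lra; assert (u1 = u2 + u3) by lra; subst x1 u1
  | assert (x2 = x1 + x3) by lra; assert (u2 = u1 + u3) by lra; subst x2 u2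
  | assert (x3 = x1 + x2) by lra; assert (u3 = u1 + u2) by lra; subst x3 u3 ];
  idx_cases p; idx_cases q; simpl;
  first [ f_equal; ring | rewrite <- Rabs_Ropp; f_equal; ring ].
Qed.

Lemma cross_euclid i j X U : (1 <= i <= 3)%nat -> (1 <= j <= 3)%nat ->
  balanced i X -> balanced i U ->
  Rabs (cross 1 2 (euclid j X) (euclid j U)) = Rabs (cross 1 2 X U).
Proof.
  intros Hi Hj HX HU. destruct (distinct3_exists j Hj) as (a & c & Hd).
  pose proof Hd as (_ & Ha & Hc & Hja & Hjc & Hac).
  rewrite <- (cross_balanced j a c) by auto using euclid_balanced.
  rewrite <- (cross_balanced i a c X U) by auto.
  unfold cross. rewrite !euclid_other by auto. reflexivity.
Qed.

Definition ratio (X U : triple) (p : nat) : R := tcomp p X / tcomp p U.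

Lemma ratio_sub_cross p q X U : tcomp p U <> 0 -> tcomp q U <> 0 ->
  ratio X U p - ratio X U q = cross p q X U / (tcomp p U * tcomp q U).
Proof. intros Hp Hq. unfold ratio, cross. field. auto. Qed.

Lemma euclid_chain_shift w t0 k m :
  euclid_chain w t0 (k + m) = euclid_chain (fun p => w (k + p)%nat) (euclid_chain w t0 k) m.
Proof.
  induction m as [|m IHm]; [now rewrite Nat.add_0_r|].
  rewrite Nat.add_succ_r. simpl. rewrite IHm. reflexivity.
Qed.

Section EuclidChain.

Variables (w : nat -> nat) (U0 : triple) (m0 : R).
Hypothesis Hw : forall k, (1 <= w k <= 3)%nat.
Hypothesis Hr : forall k, w k <> w (S k).
Hypothesis Hm0 : 0 < m0.
Hypothesis HU0 : forall p, (1 <= p <= 3)%nat -> m0 <= tcomp p U0.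

Local Notation U := (euclid_chain w U0).

Lemma euclid_chain_ge n p : (1 <= p <= 3)%nat -> m0 <= tcomp p (U n).
Proof.
  revert p. induction n as [|n IHn]; intros p Hp; [exact (HU0 p Hp)|].
  simpl euclid_chain. destruct (Nat.eq_dec p (w n)) as [->|Hpn].
  - destruct (distinct3_exists (w n) (Hw n)) as (a & c & Hd).
    pose proof Hd as (_ & Ha & Hc & _).
    rewrite euclid_new, (tsum_distinct _ _ _ _ Hd) by apply Hw.
    pose proof (IHn a Ha). pose proof (IHn c Hc). lra.
  - rewrite euclid_other by assumption. apply IHn, Hp.
Qed.

Lemma euclid_chain_newest_ge n : INR (S n) * m0 <= tcomp (w n) (U (S n)).
Proof.
  induction n as [|n IHn].
  - simpl euclid_chain. destruct (distinct3_exists (w 0%nat) (Hw 0%nat)) as (a & c & Hd).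
    pose proof Hd as (_ & Ha & Hc & _).
    rewrite euclid_new, (tsum_distinct _ _ _ _ Hd) by apply Hw.
    pose proof (euclid_chain_ge 0 a Ha). pose proof (euclid_chain_ge 0 c Hc). simpl in *. lra.
  - destruct (distinct3_extend (w n) (w (S n)) (Hw n) (Hw (S n)) (Hr n)) as [c Hd].
    pose proof Hd as (_ & _ & Hc & _).
    change (U (S (S n))) with (euclid (w (S n)) (U (S n))).
    rewrite euclid_new, (tsum_distinct _ _ _ _ Hd) by apply Hw.
    pose proof (euclid_chain_ge (S n) c Hc). rewrite (S_INR (S n)). lra.
Qed.

Lemma euclid_chain_mono n p : (1 <= p <= 3)%nat -> tcomp p (U (S n)) <= tcomp p (U (S (S n))).
Proof.
  intros Hp. change (U (S (S n))) with (euclid (w (S n)) (U (S n))).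
  destruct (Nat.eq_dec p (w (S n))) as [->|Hpn].
  - destruct (distinct3_extend (w n) (w (S n)) (Hw n) (Hw (S n)) (Hr n)) as [c Hd].
    pose proof Hd as (_ & _ & Hc & _).
    pose proof (euclid_balanced (w n) (U n) (Hw n)) as Hbal. unfold balanced in Hbal.
    change (euclid (w n) (U n)) with (U (S n)) in Hbal.
    rewrite (tsum_distinct _ _ _ _ Hd) in Hbal.
    rewrite euclid_new, (tsum_distinct _ _ _ _ Hd) by apply Hw.
    pose proof (euclid_chain_ge (S n) c Hc). lra.
  - rewrite euclid_other by assumption. lra.
Qed.

Lemma euclid_chain_pair_ge n p q : (1 <= p <= 3)%nat -> (1 <= q <= 3)%nat -> p <> q ->
  INR (S n) * m0 * m0 <= tcomp p (U (S (S n))) * tcomp q (U (S (S n))).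
Proof.
  intros Hp Hq Hpq.
  apply (pair_prod_ge (w n) (w (S n))); auto using pos_INR.
  - apply Rmult_le_pos; [apply pos_INR | lra].
  - lra.
  - change (U (S (S n))) with (euclid (w (S n)) (U (S n))).
    rewrite euclid_other by auto. apply euclid_chain_newest_ge.
  - pose proof (euclid_chain_newest_ge (S n)). rewrite (S_INR (S n)) in *. lra.
  - intros r Hr'. apply euclid_chain_ge, Hr'.
Qed.

Lemma euclid_chain_unbounded :
  (forall i, (1 <= i <= 3)%nat -> appears_infinitely w i) ->
  forall M, eventually (fun n => forall p, (1 <= p <= 3)%nat -> M <= tcomp p (U n)).
Proof.
  apply (unbounded_of_newest_growth w U m0 Hm0).
  - intros n p Hp. apply euclid_chain_mono, Hp.
  - apply euclid_chain_newest_ge.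
Qed.

Variable X0 : triple.
Local Notation X := (euclid_chain w X0).

Lemma euclid_chain_cross n :
  Rabs (cross 1 2 (X (S n)) (U (S n))) = Rabs (cross 1 2 (X 1) (U 1)).
Proof.
  induction n as [|n IHn]; [reflexivity|]. rewrite <- IHn.
  apply (cross_euclid (w n)); auto; apply euclid_balanced, Hw.
Qed.

Lemma euclid_ratio_spread n p q : (1 <= p <= 3)%nat -> (1 <= q <= 3)%nat ->
  ratio (X (S (S n))) (U (S (S n))) p - ratio (X (S (S n))) (U (S (S n))) q
    <= Rabs (cross 1 2 (X 1) (U 1)) / (INR (S n) * m0 * m0).
Proof.
  intros Hp Hq. set (G := Rabs (cross 1 2 (X 1) (U 1))).
  assert (HA : 0 < INR (S n) * m0 * m0).
  { apply Rmult_lt_0_compat; [apply Rmult_lt_0_compat; [apply lt_0_INR; lia | lra] | lra]. }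
  assert (HG : 0 <= G / (INR (S n) * m0 * m0)).
  { apply Rmult_le_pos; [apply Rabs_pos | left; apply Rinv_0_lt_compat, HA]. }
  destruct (Nat.eq_dec p q) as [->|Hpq]; [lra|].
  pose proof (euclid_chain_ge (S (S n)) p Hp). pose proof (euclid_chain_ge (S (S n)) q Hq).
  rewrite ratio_sub_cross by lra.
  eapply Rle_trans; [apply Rle_abs|].
  rewrite Rabs_div by (apply Rmult_integral_contrapositive; split; lra).
  rewrite (cross_balanced (w (S n))) by (auto; apply euclid_balanced, Hw).
  rewrite euclid_chain_cross. fold G.
  rewrite (Rabs_right (_ * _)) by (apply Rle_ge, Rmult_le_pos; lra).
  apply Rmult_le_compat_l; [apply Rabs_pos|].
  apply Rinv_le_contravar; [exact HA|]. apply euclid_chain_pair_ge; assumption.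
Qed.

Lemma euclid_ratio_next n p : (1 <= p <= 3)%nat ->
  min3 (ratio (X n) (U n)) <= ratio (X (S n)) (U (S n)) p <= max3 (ratio (X n) (U n)).
Proof.
  intros Hp. simpl euclid_chain. unfold ratio.
  destruct (Nat.eq_dec p (w n)) as [->|Hpn].
  - destruct (distinct3_exists (w n) (Hw n)) as (a & c & Hd).
    pose proof Hd as (_ & Ha & Hc & _).
    rewrite !euclid_new, !(tsum_distinct _ _ _ _ Hd) by apply Hw.
    replace (tcomp (w n) (X n) + tcomp a (X n) + tcomp c (X n) - tcomp (w n) (X n))
      with (tcomp a (X n) + tcomp c (X n)) by ring.
    replace (tcomp (w n) (U n) + tcomp a (U n) + tcomp c (U n) - tcomp (w n) (U n))
      with (tcomp a (U n) + tcomp c (U n)) by ring.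
    pose proof (euclid_chain_ge n a Ha). pose proof (euclid_chain_ge n c Hc).
    apply mediant_between; try lra; apply (min3_le_max3 (ratio (X n) (U n))); assumption.
  - rewrite !euclid_other by assumption. apply (min3_le_max3 (ratio (X n) (U n))), Hp.
Qed.

Lemma euclid_ratio_lim :
  exists l : R, forall p, (1 <= p <= 3)%nat -> is_lim_seq (fun n => ratio (X n) (U n) p) l.
Proof.
  set (lo := fun n => min3 (ratio (X n) (U n))).
  set (hi := fun n => max3 (ratio (X n) (U n))).
  set (G := Rabs (cross 1 2 (X 1) (U 1))).
  assert (Hgap : is_lim_seq (fun n => hi n - lo n) 0).
  { apply is_lim_seq_incr_n with (N := 2%nat).
    apply is_lim_seq_le_le with (u := fun _ => 0) (w := fun n => G / (m0 * m0) / INR (S n)).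
    - intros n. replace (n + 2)%nat with (S (S n)) by lia. unfold lo, hi. split.
      + pose proof (min3_le_max3 (ratio (X (S (S n))) (U (S (S n)))) 1 ltac:(lia)).
        lra.
      + replace (G / (m0 * m0) / INR (S n)) with (G / (INR (S n) * m0 * m0))
          by (field; split; [lra | apply not_0_INR; lia]).
        apply max3_sub_min3. intros p q Hp Hq. apply euclid_ratio_spread; assumption.
    - apply is_lim_seq_const.
    - apply (is_lim_seq_incr_1 (fun n => G / (m0 * m0) / INR n)), lim_const_div_INR. }
  destruct (nested_lim lo hi) as (l & Hlo & Hhi); try assumption.
  - intros n. apply min3_glb. intros p Hp. apply euclid_ratio_next, Hp.
  - intros n. apply max3_lub. intros p Hp. apply euclid_ratio_next, Hp.
  - intros n. pose proof (min3_le_max3 (ratio (X n) (U n)) 1 ltac:(lia)). unfold lo, hi. lra.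
  - exists l. intros p Hp. apply is_lim_seq_le_le with (u := lo) (w := hi); try assumption.
    intros n. apply min3_le_max3, Hp.
Qed.

End EuclidChain.

(** * Generalized Markov chains *)

(* The entry x is replaced by the other root y; u is the entry mutated just before, v the third. *)
Lemma vieta_root_eq (la lb lc x y u v : R) : x <> 0 ->
  x ^ 2 + u ^ 2 + v ^ 2 + lb * u * v + la * x * v + lc * x * u
    = (3 + la + lb + lc) * x * u * v ->
  x * y = u ^ 2 + lb * u * v + v ^ 2 ->
  y = (3 + la + lb + lc) * u * v - la * v - lc * u - x /\
  y ^ 2 + u ^ 2 + v ^ 2 + lb * u * v + la * y * v + lc * y * u
    = (3 + la + lb + lc) * y * u * v.
Proof.
  intros Hx Heq Hy.
  assert (E : y = (3 + la + lb + lc) * u * v - la * v - lc * u - x).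
  { apply Rmult_eq_reg_l with x; [|exact Hx]. rewrite Hy. nra. }
  split; [exact E|]. rewrite E in Hy |- *. nra.
Qed.

Lemma vieta_root_bounds (la lb lc x y u v : R) :
  0 <= la -> 0 <= lb -> 0 <= lc -> 1 <= u -> 1 <= v -> 1 <= x -> x * v <= u ->
  y = (3 + la + lb + lc) * u * v - la * v - lc * u - x ->
  2 * u * v <= y /\ x <= y /\ y <= (3 + la + lb + lc) * u * v /\
  (forall m, 1 <= m -> m <= u -> m <= v ->
     m * ((3 + la + lb + lc) * u * v - y) <= (la + lb + lc + 1) * y).
Proof.
  intros Hla Hlb Hlc Hu Hv Hx Hxv Hy.
  assert (Hxu : x <= u) by nra.
  assert (Huv : u <= u * v) by nra.
  assert (H2 : 2 * u * v <= y).
  { assert (0 <= la * v * (u - 1)) by (apply Rmult_le_pos; nra).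
    assert (0 <= lc * u * (v - 1)) by (apply Rmult_le_pos; nra).
    assert (0 <= lb * (u * v)) by (apply Rmult_le_pos; nra).
    subst y. nra. }
  split; [exact H2|]. split; [lra|]. split.
  - assert (0 <= la * v) by nra. assert (0 <= lc * u) by nra. lra.
  - intros m Hm Hmu Hmv.
    assert (0 <= la * v) by nra. assert (0 <= lc * u) by nra.
    assert (m * (la * v) <= la * (u * v)) by nra.
    assert (m * (lc * u) <= lc * (u * v)) by nra.
    assert (m * x <= u * v) by nra.
    assert (lb * (u * v) <= lb * y) by nra.
    assert ((la + lc + 1) * (u * v) <= (la + lc + 1) * y) by nra.
    subst y. nra.
Qed.

Section MarkovTriples.

Variables l1 l2 l3 : nat.

Definition lam (j : nat) : R := INR (match j with 1%nat => l1 | 2%nat => l2 | _ => l3 end).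

Definition markov_const : R := 3 + INR l1 + INR l2 + INR l3.

Definition markov_slack : R := INR l1 + INR l2 + INR l3 + 1.

Definition markov_eq (t : triple) : Prop :=
  let '(x1, x2, x3) := t in
  x1 ^ 2 + x2 ^ 2 + x3 ^ 2 + INR l3 * x1 * x2 + INR l1 * x2 * x3 + INR l2 * x3 * x1
    = markov_const * x1 * x2 * x3.

(* [i] is the index mutated last; [oprod i t <= tcomp i t] forces the next Vieta root to be the
   larger one. *)
Definition markov_inv (i : nat) (t : triple) : Prop :=
  (forall p, (1 <= p <= 3)%nat -> 1 <= tcomp p t) /\ markov_eq t /\ oprod i t <= tcomp i t.

Lemma lam_nonneg j : 0 <= lam j.
Proof. apply pos_INR. Qed.

Lemma lam_le_slack j : lam j <= markov_slack.
Proof.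
  unfold lam, markov_slack. pose proof (pos_INR l1). pose proof (pos_INR l2).
  pose proof (pos_INR l3). destruct j as [|[|[|j]]]; lra.
Qed.

Lemma markov_slack_ge1 : 1 <= markov_slack.
Proof.
  unfold markov_slack. pose proof (pos_INR l1). pose proof (pos_INR l2).
  pose proof (pos_INR l3). lra.
Qed.

Lemma markov_const_ge3 : 3 <= markov_const.
Proof.
  unfold markov_const. pose proof (pos_INR l1). pose proof (pos_INR l2).
  pose proof (pos_INR l3). lra.
Qed.

Lemma markov_consts_distinct j a c : distinct3 j a c ->
  markov_const = 3 + lam a + lam j + lam c /\ markov_slack = lam a + lam j + lam c + 1.
Proof.
  intros (Hj & Ha & Hc & Hja & Hjc & Hac). unfold markov_const, markov_slack, lam.
  idx_cases j; idx_cases a; idx_cases c; split; ring.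
Qed.

Lemma markov_eq_distinct j a c t : distinct3 j a c ->
  markov_eq t <->
  tcomp j t ^ 2 + tcomp a t ^ 2 + tcomp c t ^ 2 + lam j * tcomp a t * tcomp c t
    + lam a * tcomp j t * tcomp c t + lam c * tcomp j t * tcomp a t
  = markov_const * tcomp j t * tcomp a t * tcomp c t.
Proof.
  intros (Hj & Ha & Hc & Hja & Hjc & Hac). destruct t as [[x1 x2] x3].
  unfold markov_eq, lam. idx_cases j; idx_cases a; idx_cases c; simpl; split; intros H; lra.
Qed.

Lemma gmu_new j a c t : distinct3 j a c -> tcomp j t <> 0 ->
  tcomp j t * tcomp j (gmu l1 l2 l3 j t) = tcomp a t ^ 2 + lam j * tcomp a t * tcomp c t + tcomp c t ^ 2.
Proof.
  intros (Hj & Ha & Hc & Hja & Hjc & Hac) Ht. destruct t as [[x1 x2] x3]. unfold lam.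
  idx_cases j; idx_cases a; idx_cases c; simpl in *; field; exact Ht.
Qed.

Lemma gmu_other j p t : (1 <= p <= 3)%nat -> p <> j -> tcomp p (gmu l1 l2 l3 j t) = tcomp p t.
Proof. intros Hp Hpj. destruct t as [[x y] z]. idx_cases p; idx_cases j; reflexivity. Qed.

End MarkovTriples.

Section MarkovStep.

Variables (l1 l2 l3 i j : nat) (t : triple).
Hypothesis Hinv : markov_inv l1 l2 l3 i t.
Hypotheses (Hi : (1 <= i <= 3)%nat) (Hj : (1 <= j <= 3)%nat) (Hij : i <> j).

Local Notation y := (tcomp j (gmu l1 l2 l3 j t)).

Lemma markov_step_root c : distinct3 j i c ->
  y = (3 + lam l1 l2 l3 i + lam l1 l2 l3 j + lam l1 l2 l3 c) * tcomp i t * tcomp c t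
      - lam l1 l2 l3 i * tcomp c t - lam l1 l2 l3 c * tcomp i t - tcomp j t /\
  y ^ 2 + tcomp i t ^ 2 + tcomp c t ^ 2 + lam l1 l2 l3 j * tcomp i t * tcomp c t
    + lam l1 l2 l3 i * y * tcomp c t + lam l1 l2 l3 c * y * tcomp i t
  = (3 + lam l1 l2 l3 i + lam l1 l2 l3 j + lam l1 l2 l3 c) * y * tcomp i t * tcomp c t.
Proof.
  intros Hd. destruct Hinv as (Hge & Heq & _).
  pose proof (Hge j Hj) as Htj.
  apply vieta_root_eq; [lra | | apply (gmu_new l1 l2 l3 j i c t Hd); lra].
  destruct (markov_consts_distinct l1 l2 l3 j i c Hd) as [<- _].
  apply (markov_eq_distinct l1 l2 l3 j i c t Hd), Heq.
Qed.

Lemma markov_step_bounds :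
  2 * oprod j t <= y /\ tcomp j t <= y /\ y <= markov_const l1 l2 l3 * oprod j t /\
  (forall m, 1 <= m -> (forall p, (1 <= p <= 3)%nat -> m <= tcomp p t) ->
     m * (markov_const l1 l2 l3 * oprod j t - y) <= markov_slack l1 l2 l3 * y).
Proof.
  destruct (distinct3_extend i j Hi Hj Hij) as [c Hd].
  pose proof Hd as (_ & _ & Hc & _).
  destruct Hinv as (Hge & _ & Hdom).
  assert (Hd' : distinct3 i j c) by (unfold distinct3 in *; lia).
  rewrite (oprod_distinct i j c t Hd') in Hdom.
  rewrite (oprod_distinct j i c t Hd).
  destruct (markov_consts_distinct l1 l2 l3 j i c Hd) as [-> ->].
  destruct (vieta_root_bounds (lam l1 l2 l3 i) (lam l1 l2 l3 j) (lam l1 l2 l3 c)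
              (tcomp j t) y (tcomp i t) (tcomp c t)) as (H2 & Hxy & Hup & Hlow);
    auto using lam_nonneg.
  - apply (markov_step_root c Hd).
  - split; [lra|]. split; [exact Hxy|]. split; [rewrite <- Rmult_assoc; exact Hup|].
    intros m Hm Hmp. rewrite <- Rmult_assoc. apply Hlow; auto.
Qed.

Lemma markov_step_inv : markov_inv l1 l2 l3 j (gmu l1 l2 l3 j t).
Proof.
  destruct (distinct3_extend i j Hi Hj Hij) as [c Hd].
  pose proof Hd as (_ & _ & Hc & _ & Hjc & _).
  destruct markov_step_bounds as (H2 & _).
  destruct Hinv as (Hge & _).
  assert (Hprod : 1 <= oprod j t).
  { rewrite (oprod_distinct j i c t Hd). pose proof (Hge i Hi). pose proof (Hge c Hc). nra. }
  split; [|split].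
  - intros p Hp. destruct (Nat.eq_dec p j) as [->|Hpj]; [lra|].
    rewrite gmu_other by assumption. apply Hge, Hp.
  - apply (markov_eq_distinct l1 l2 l3 j i c _ Hd).
    rewrite (gmu_other l1 l2 l3 j i), (gmu_other l1 l2 l3 j c) by lia.
    destruct (markov_consts_distinct l1 l2 l3 j i c Hd) as [-> _].
    apply (markov_step_root c Hd).
  - rewrite (oprod_distinct j i c _ Hd), (gmu_other l1 l2 l3 j i), (gmu_other l1 l2 l3 j c) by lia.
    pose proof (oprod_distinct j i c t Hd). lra.
Qed.

End MarkovStep.

Section MarkovChain.

Variables (l1 l2 l3 : nat) (w : nat -> nat).
Hypothesis Hw : forall k, (1 <= w k <= 3)%nat.
Hypothesis Hr : forall k, w k <> w (S k).

Local Notation Mk := (markov_chain l1 l2 l3 w).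

Lemma markov_chain_inv n : markov_inv l1 l2 l3 (w n) (Mk (S n)).
Proof.
  induction n as [|n IHn].
  - destruct (distinct3_exists (w 0%nat) (Hw 0%nat)) as (a & c & _ & Ha & _ & Hwa & _).
    apply (markov_step_inv l1 l2 l3 a); auto.
    split; [|split].
    + intros p Hp. idx_cases p; simpl; lra.
    + unfold markov_eq, markov_const. simpl. ring.
    + idx_cases a; simpl; lra.
  - apply (markov_step_inv l1 l2 l3 (w n)); auto.
Qed.

Lemma markov_chain_ge1 n p : (1 <= p <= 3)%nat -> 1 <= tcomp p (Mk n).
Proof.
  intros Hp. destruct n as [|n].
  - idx_cases p; simpl; lra.
  - apply (markov_chain_inv n), Hp.
Qed.

Lemma markov_chain_mono n p : (1 <= p <= 3)%nat -> tcomp p (Mk (S n)) <= tcomp p (Mk (S (S n))).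
Proof.
  intros Hp. change (Mk (S (S n))) with (gmu l1 l2 l3 (w (S n)) (Mk (S n))).
  destruct (Nat.eq_dec p (w (S n))) as [->|Hpn].
  - apply (markov_step_bounds l1 l2 l3 (w n)); auto using markov_chain_inv.
  - rewrite gmu_other by assumption. lra.
Qed.

Lemma markov_chain_mono_le k n p : (1 <= p <= 3)%nat -> (k <= n)%nat ->
  tcomp p (Mk (S k)) <= tcomp p (Mk (S n)).
Proof.
  intros Hp Hkn.
  assert (Hgrow : Un_growing (fun m => tcomp p (Mk (S m))))
    by (intros m; apply markov_chain_mono, Hp).
  apply Rge_le, (growing_prop _ n k Hgrow Hkn).
Qed.

Lemma markov_chain_newest_double n :
  2 * tcomp (w n) (Mk (S n)) <= tcomp (w (S n)) (Mk (S (S n))).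
Proof.
  destruct (distinct3_extend (w n) (w (S n)) (Hw n) (Hw (S n)) (Hr n)) as [c Hd].
  pose proof Hd as (_ & _ & Hc & _).
  destruct (markov_step_bounds l1 l2 l3 (w n) (w (S n)) (Mk (S n))) as (H2 & _);
    auto using markov_chain_inv.
  rewrite (oprod_distinct _ _ _ _ Hd) in H2.
  pose proof (markov_chain_ge1 (S n) c Hc). pose proof (markov_chain_ge1 (S n) (w n) (Hw n)).
  change (Mk (S (S n))) with (gmu l1 l2 l3 (w (S n)) (Mk (S n))). nra.
Qed.

Lemma markov_chain_newest_ge n : INR (S n) <= tcomp (w n) (Mk (S n)).
Proof.
  induction n as [|n IHn].
  - apply markov_chain_ge1, Hw.
  - pose proof (markov_chain_newest_double n). pose proof (pos_INR n).
    rewrite !S_INR in *. lra.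
Qed.

Lemma markov_chain_unbounded :
  (forall i, (1 <= i <= 3)%nat -> appears_infinitely w i) ->
  forall M, eventually (fun n => forall p, (1 <= p <= 3)%nat -> M <= tcomp p (Mk n)).
Proof.
  apply (unbounded_of_newest_growth w Mk 1 Rlt_0_1).
  - intros n p Hp. apply markov_chain_mono, Hp.
  - intros n. rewrite Rmult_1_r. apply markov_chain_newest_ge.
Qed.

End MarkovChain.

(** * Every index recurs *)

Definition log_triple (K : R) (t : triple) : triple :=
  let '(x1, x2, x3) := t in (ln (K * x1), ln (K * x2), ln (K * x3)).

Lemma log_triple_comp K t p : tcomp p (log_triple K t) = ln (K * tcomp p t).
Proof. destruct t as [[x y] z]. destruct p as [|[|[|p]]]; reflexivity. Qed.

Lemma log_triple_euclid K t j : 0 < K -> (1 <= j <= 3)%nat ->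
  (forall p, (1 <= p <= 3)%nat -> 0 < tcomp p t) ->
  tsum (log_triple K t) - tcomp j (log_triple K t) = ln (K * (K * oprod j t)).
Proof.
  intros HK Hj Ht. destruct (distinct3_exists j Hj) as (a & c & Hd).
  pose proof Hd as (_ & Ha & Hc & _).
  rewrite (tsum_distinct _ _ _ _ Hd), (oprod_distinct _ _ _ _ Hd), !log_triple_comp.
  replace (K * (K * (tcomp a t * tcomp c t))) with ((K * tcomp a t) * (K * tcomp c t)) by ring.
  pose proof (Ht a Ha). pose proof (Ht c Hc).
  rewrite (ln_mult (K * tcomp a t)) by (apply Rmult_lt_0_compat; lra). ring.
Qed.

Lemma markov_log_step l1 l2 l3 i j t m : markov_inv l1 l2 l3 i t ->
  (1 <= i <= 3)%nat -> (1 <= j <= 3)%nat -> i <> j ->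
  1 <= m -> (forall p, (1 <= p <= 3)%nat -> m <= tcomp p t) ->
  let K := markov_const l1 l2 l3 in
  let L := log_triple K t in
  tsum L - tcomp j L - markov_slack l1 l2 l3 / m
    <= ln (K * tcomp j (gmu l1 l2 l3 j t)) <= tsum L - tcomp j L.
Proof.
  intros Hinv Hi Hj Hij Hm Hmt K L.
  destruct (markov_step_bounds l1 l2 l3 i j t Hinv Hi Hj Hij) as (H2 & _ & Hup & Hlow).
  fold K in Hup, Hlow. specialize (Hlow m Hm Hmt).
  set (y := tcomp j (gmu l1 l2 l3 j t)) in *.
  pose proof (markov_slack_ge1 l1 l2 l3) as HLam1.
  set (Lam := markov_slack l1 l2 l3) in *.
  assert (HK : 3 <= K) by apply markov_const_ge3.
  assert (HLam : 0 <= Lam / m)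
    by (apply Rmult_le_pos; [lra | left; apply Rinv_0_lt_compat; lra]).
  assert (Ho : 0 < oprod j t).
  { destruct (distinct3_exists j Hj) as (a & c & Hd). pose proof Hd as (_ & Ha & Hc & _).
    rewrite (oprod_distinct _ _ _ _ Hd). apply Rmult_lt_0_compat.
    - pose proof (Hmt a Ha). lra.
    - pose proof (Hmt c Hc). lra. }
  assert (Hy : 0 < y) by lra.
  unfold L. rewrite log_triple_euclid
    by (first [lra | assumption | intros p Hp; pose proof (Hmt p Hp); lra]).
  split.
  - assert (E : K * oprod j t <= y * (1 + Lam / m)).
    { assert (K * oprod j t - y <= y * (Lam / m)); [|lra].
      apply Rmult_le_reg_l with m; [lra|].
      replace (m * (y * (Lam / m))) with (Lam * y) by (field; lra). exact Hlow. }
    assert (ln (K * (K * oprod j t)) <= ln (K * y) + ln (1 + Lam / m)).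
    { rewrite <- ln_mult by (repeat apply Rmult_lt_0_compat; lra).
      apply ln_le; [repeat apply Rmult_lt_0_compat; lra|].
      rewrite Rmult_assoc. apply Rmult_le_compat_l; lra. }
    pose proof (ln_1_plus_le (Lam / m) HLam). lra.
  - apply ln_le; [apply Rmult_lt_0_compat; lra|]. apply Rmult_le_compat_l; lra.
Qed.

Definition close_below (eps eta : R) (X W U : triple) : Prop :=
  forall p, (1 <= p <= 3)%nat -> 0 <= tcomp p X - tcomp p W <= eps * tcomp p U - eta.

Lemma close_below_euclid j X W W' U eps eta : (1 <= j <= 3)%nat ->
  close_below eps eta X W U ->
  (forall p, (1 <= p <= 3)%nat -> p <> j -> tcomp p W' = tcomp p W) ->
  tsum W - tcomp j W - eta <= tcomp j W' <= tsum W - tcomp j W ->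
  close_below eps eta (euclid j X) W' (euclid j U).
Proof.
  intros Hj Hclose HW' Hnew p Hp.
  destruct (Nat.eq_dec p j) as [->|Hpj].
  - destruct (distinct3_exists j Hj) as (a & c & Hd). pose proof Hd as (_ & Ha & Hc & _).
    rewrite !euclid_new, !(tsum_distinct _ _ _ _ Hd) by exact Hj.
    rewrite (tsum_distinct _ _ _ _ Hd) in Hnew.
    pose proof (Hclose a Ha). pose proof (Hclose c Hc). lra.
  - rewrite !euclid_other, HW' by assumption. apply Hclose, Hp.
Qed.

Section LogMarkovTracking.

Variables (l1 l2 l3 : nat) (w : nat -> nat) (U0 : triple) (m0 M : R) (k : nat).
Hypothesis Hw : forall k, (1 <= w k <= 3)%nat.
Hypothesis Hr : forall k, w k <> w (S k).
Hypothesis Hm0 : 0 < m0.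
Hypothesis HU0 : forall p, (1 <= p <= 3)%nat -> m0 <= tcomp p U0.
Hypothesis HM : 1 <= M.
Hypothesis HMk : forall p, (1 <= p <= 3)%nat -> M <= tcomp p (markov_chain l1 l2 l3 w (S k)).

Local Notation K := (markov_const l1 l2 l3).
Local Notation eta := (markov_slack l1 l2 l3 / M).
Local Notation Mk := (markov_chain l1 l2 l3 w).

Lemma log_markov_close_below m :
  close_below (eta / m0) eta
    (euclid_chain (fun p => w (S k + p)%nat) (log_triple K (Mk (S k))) m)
    (log_triple K (Mk (S k + m))) (euclid_chain w U0 (S k + m)).
Proof.
  assert (Heta : 0 <= eta).
  { pose proof (markov_slack_ge1 l1 l2 l3).
    apply Rmult_le_pos; [lra | left; apply Rinv_0_lt_compat; lra]. }
  induction m as [|m IHm].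
  - intros p Hp. rewrite Nat.add_0_r. change (euclid_chain ?v ?t0 0) with t0. split; [lra|].
    pose proof (euclid_chain_ge w U0 m0 Hw Hm0 HU0 (S k) p Hp).
    replace (eta / m0 * tcomp p (euclid_chain w U0 (S k)) - eta)
      with (eta * (tcomp p (euclid_chain w U0 (S k)) - m0) / m0) by (field; lra).
    rewrite Rminus_diag.
    apply Rmult_le_pos; [apply Rmult_le_pos; lra | left; apply Rinv_0_lt_compat, Hm0].
  - rewrite Nat.add_succ_r.
    change (euclid_chain ?v ?t0 (S ?n)) with (euclid (v n) (euclid_chain v t0 n)).
    change (Mk (S (S k + m))) with (gmu l1 l2 l3 (w (S k + m)%nat) (Mk (S k + m))).
    apply close_below_euclid with (W := log_triple K (Mk (S k + m))); [apply Hw | exact IHm | |].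
    + intros p Hp Hpj. rewrite !log_triple_comp, gmu_other by assumption. reflexivity.
    + change (S k + m)%nat with (S (k + m)).
      rewrite (log_triple_comp K (gmu _ _ _ _ _)).
      apply (markov_log_step l1 l2 l3 (w (k + m)%nat)); auto using markov_chain_inv.
      intros p Hp. apply Rle_trans with (tcomp p (Mk (S k))); [apply HMk, Hp|].
      apply markov_chain_mono_le; [assumption | assumption | exact Hp | lia].
Qed.

End LogMarkovTracking.

Section AllIndicesRecurrent.

Variables (l1 l2 l3 : nat) (w : nat -> nat) (U0 : triple) (m0 : R).
Hypothesis Hw : forall k, (1 <= w k <= 3)%nat.
Hypothesis Hr : forall k, w k <> w (S k).
Hypothesis Hm0 : 0 < m0.
Hypothesis HU0 : forall p, (1 <= p <= 3)%nat -> m0 <= tcomp p U0.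
Hypothesis Happ : forall i, (1 <= i <= 3)%nat -> appears_infinitely w i.

Local Notation Mk := (markov_chain l1 l2 l3 w).
Local Notation U := (euclid_chain w U0).

Lemma log_markov_ratio_near (eps M q : R) (k : nat) : 0 < eps -> 1 <= M ->
  markov_slack l1 l2 l3 / M / m0 <= eps / 3 ->
  (forall p, (1 <= p <= 3)%nat -> M <= tcomp p (Mk (S k))) ->
  (forall p, (1 <= p <= 3)%nat -> is_lim_seq (fun m =>
     ratio (euclid_chain (fun r => w (S k + r)%nat) (log_triple (markov_const l1 l2 l3) (Mk (S k))) m)
           (U (S k + m)) p) q) ->
  eventually (fun n => forall p, (1 <= p <= 3)%nat ->
    Rabs (ln (tcomp p (Mk n)) / tcomp p (U n) - q) <= eps).
Proof.
  intros Heps HM Heta HMk Hq.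
  set (K := markov_const l1 l2 l3) in *. set (ws := fun r => w (S k + r)%nat) in *.
  assert (HlnK : 0 <= ln K).
  { rewrite <- ln_1. apply ln_le; [lra|]. pose proof (markov_const_ge3 l1 l2 l3). unfold K. lra. }
  assert (Heps3 : 0 < eps / 3) by lra.
  assert (Hratio : eventually (fun m => forall p, (1 <= p <= 3)%nat ->
    Rabs (ratio (euclid_chain ws (log_triple K (Mk (S k))) m) (U (S k + m)) p - q) < eps / 3)).
  { apply eventually_forall3. intros p Hp.
    apply (proj2 (is_lim_seq_spec _ _) (Hq p Hp) (mkposreal _ Heps3)). }
  pose proof (proj2 (eventually_shift _ (S k))
    (euclid_chain_unbounded w U0 m0 Hw Hr Hm0 HU0 Happ (3 * ln K / eps))) as Hbig.
  apply (eventually_shift _ (S k)).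
  destruct Hratio as [N1 Hrat], Hbig as [N2 Hu]. exists (N1 + N2)%nat. intros m Hm p Hp.
  specialize (Hrat m ltac:(lia) p Hp). specialize (Hu m ltac:(lia) p Hp).
  pose proof (log_markov_close_below l1 l2 l3 w U0 m0 M k Hw Hr Hm0 HU0 HM HMk m p Hp) as Hclose.
  fold K ws in Hclose. rewrite log_triple_comp in Hclose.
  pose proof (euclid_chain_ge w U0 m0 Hw Hm0 HU0 (S k + m) p Hp) as HUpos.
  pose proof (markov_chain_ge1 l1 l2 l3 w Hw Hr (S k + m) p Hp) as Hx.
  replace (ln (tcomp p (Mk (S k + m)))) with (ln (K * tcomp p (Mk (S k + m))) - ln K)
    by (rewrite ln_mult by (unfold K; pose proof (markov_const_ge3 l1 l2 l3); lra); ring).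
  replace eps with (eps / 3 + eps / 3 + eps / 3) by field.
  apply abs_ratio_perturb with (X := tcomp p (euclid_chain ws (log_triple K (Mk (S k))) m));
    [lra | left; exact Hrat | |].
  - split; [apply Hclose|].
    pose proof (markov_slack_ge1 l1 l2 l3).
    assert (0 <= markov_slack l1 l2 l3 / M)
      by (apply Rmult_le_pos; [lra | left; apply Rinv_0_lt_compat; lra]).
    apply Rle_trans with (markov_slack l1 l2 l3 / M / m0 * tcomp p (U (S k + m))); [lra|].
    apply Rmult_le_compat_r; lra.
  - split; [exact HlnK|].
    apply Rle_trans with (eps / 3 * (3 * ln K / eps)); [right; field; lra|].
    apply Rmult_le_compat_l; lra.
Qed.

Lemma log_markov_ratio_lim :
  exists q : R, forall j, (1 <= j <= 3)%nat ->
    is_lim_seq (fun n => ln (tcomp j (Mk n)) / tcomp j (U n)) q.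
Proof.
  apply (common_lim_of_approx (fun j n => ln (tcomp j (Mk n)) / tcomp j (U n))).
  intros eps Heps.
  destruct (exists_ge1_quotient_le (markov_slack l1 l2 l3) m0 (eps / 3)) as (M & HM & Heta);
    [pose proof (markov_slack_ge1 l1 l2 l3); lra | exact Hm0 | lra |].
  destruct (markov_chain_unbounded l1 l2 l3 w Hw Hr Happ M) as [k Hk].
  set (ws := fun r => w (S k + r)%nat).
  assert (Hws : forall r, (1 <= ws r <= 3)%nat) by (intros r; apply Hw).
  assert (Hwr : forall r, ws r <> ws (S r))
    by (intros r; unfold ws; rewrite Nat.add_succ_r; apply Hr).
  destruct (euclid_ratio_lim ws (U (S k)) m0 Hws Hwr Hm0 (euclid_chain_ge w U0 m0 Hw Hm0 HU0 (S k))
              (log_triple (markov_const l1 l2 l3) (Mk (S k)))) as [q Hq].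
  exists q. apply (log_markov_ratio_near eps M q k); try assumption.
  - intros p Hp. apply Hk; [lia | exact Hp].
  - intros p Hp. eapply is_lim_seq_ext; [|apply (Hq p Hp)].
    intros m. unfold ratio. rewrite euclid_chain_shift. reflexivity.
Qed.

End AllIndicesRecurrent.

(** * One index eventually absent *)

Section OneIndexFinite.

Variables (l1 l2 l3 : nat) (w : nat -> nat) (U0 : triple) (m0 : R) (i N : nat).
Hypothesis Hw : forall k, (1 <= w k <= 3)%nat.
Hypothesis Hr : forall k, w k <> w (S k).
Hypothesis Hm0 : 0 < m0.
Hypothesis HU0 : forall p, (1 <= p <= 3)%nat -> m0 <= tcomp p U0.
Hypothesis Hi : (1 <= i <= 3)%nat.
Hypothesis HN : forall k, (N <= k)%nat -> w k <> i.

Local Notation Mk := (markov_chain l1 l2 l3 w).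
Local Notation U := (euclid_chain w U0).
Local Notation P m := (tcomp (w m) (Mk (S m))).
Local Notation PU m := (tcomp (w m) (U (S m))).

Lemma tail_distinct m : (N <= m)%nat -> distinct3 (w (S m)) (w m) i.
Proof.
  intros Hm. pose proof (Hw m). pose proof (Hw (S m)). pose proof (Hr m).
  pose proof (HN m Hm). pose proof (HN (S m) ltac:(lia)). unfold distinct3. lia.
Qed.

Lemma tail_period m : (N <= m)%nat -> w (S (S m)) = w m.
Proof.
  intros Hm. pose proof (tail_distinct m Hm). unfold distinct3 in *.
  pose proof (Hw (S (S m))). pose proof (Hr (S m)). pose proof (HN (S (S m)) ltac:(lia)). lia.
Qed.

Lemma markov_tail_frozen n : (N <= n)%nat -> tcomp i (Mk n) = tcomp i (Mk N).
Proof.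
  induction 1 as [|n Hn IHn]; [reflexivity|].
  change (Mk (S n)) with (gmu l1 l2 l3 (w n) (Mk n)).
  rewrite gmu_other by (auto; apply not_eq_sym, HN, Hn). exact IHn.
Qed.

Lemma euclid_tail_frozen n : (N <= n)%nat -> tcomp i (U n) = tcomp i (U N).
Proof.
  induction 1 as [|n Hn IHn]; [reflexivity|].
  change (U (S n)) with (euclid (w n) (U n)).
  rewrite euclid_other by (auto; apply not_eq_sym, HN, Hn). exact IHn.
Qed.

Lemma markov_tail_recurrence m : (N <= m)%nat ->
  P m * P (S (S m)) = P (S m) ^ 2 + lam l1 l2 l3 (w m) * P (S m) * tcomp i (Mk N)
                      + tcomp i (Mk N) ^ 2.
Proof.
  intros Hm. pose proof (tail_distinct m Hm) as Hd.
  assert (Hd' : distinct3 (w m) (w (S m)) i) by (unfold distinct3 in *; lia).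
  change (Mk (S (S (S m)))) with (gmu l1 l2 l3 (w (S (S m))) (Mk (S (S m)))).
  rewrite (tail_period m Hm).
  replace (P m) with (tcomp (w m) (Mk (S (S m)))).
  2:{ change (Mk (S (S m))) with (gmu l1 l2 l3 (w (S m)) (Mk (S m))).
      apply gmu_other; [apply Hw | apply Hr]. }
  rewrite <- (markov_tail_frozen (S (S m))) by lia.
  apply gmu_new; [exact Hd'|].
  pose proof (markov_chain_ge1 l1 l2 l3 w Hw Hr (S (S m)) (w m) (Hw m)). lra.
Qed.

Lemma euclid_tail_linear n : PU (N + n)%nat = PU N + INR n * tcomp i (U N).
Proof.
  induction n as [|n IHn]; [rewrite Nat.add_0_r; simpl; ring|].
  rewrite Nat.add_succ_r.
  change (U (S (S (N + n)))) with (euclid (w (S (N + n))) (U (S (N + n)))).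
  pose proof (tail_distinct (N + n) ltac:(lia)) as Hd.
  rewrite euclid_new, (tsum_distinct _ _ _ _ Hd) by apply Hw.
  rewrite IHn, (euclid_tail_frozen (S (N + n))), S_INR by lia. ring.
Qed.

Lemma newest_log_ratio_lim : exists L : R, is_lim_seq (fun m => ln (P m) / PU m) L.
Proof.
  set (c0 := tcomp i (Mk N)). set (z0 := tcomp i (U N)).
  assert (Hc0 : 1 <= c0) by apply (markov_chain_ge1 l1 l2 l3 w Hw Hr N i Hi).
  assert (Hz0 : m0 <= z0) by apply (euclid_chain_ge w U0 m0 Hw Hm0 HU0 N i Hi).
  destruct (log_growth_lim (fun n => P (N + n)%nat) (markov_slack l1 l2 l3 * c0 + c0 ^ 2))
    as [delta Hdelta].
  - intros m. apply (markov_chain_ge1 l1 l2 l3 w Hw Hr), Hw.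
  - intros m. rewrite Nat.add_succ_r. apply markov_chain_newest_double; assumption.
  - pose proof (lam_le_slack l1 l2 l3 0). pose proof (lam_nonneg l1 l2 l3 0). nra.
  - intros m. rewrite !Nat.add_succ_r.
    pose proof (markov_tail_recurrence (N + m) ltac:(lia)) as Hrec. fold c0 in Hrec.
    pose proof (markov_chain_ge1 l1 l2 l3 w Hw Hr (S (S (N + m))) _ (Hw (S (N + m)))) as HQ.
    pose proof (markov_chain_ge1 l1 l2 l3 w Hw Hr (S (N + m)) _ (Hw (N + m)%nat)).
    pose proof (markov_chain_ge1 l1 l2 l3 w Hw Hr (S (S (S (N + m)))) _ (Hw (S (S (N + m))))).
    pose proof (lam_le_slack l1 l2 l3 (w (N + m)%nat)). pose proof (lam_nonneg l1 l2 l3 (w (N + m)%nat)).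
    set (Q := P (S (N + m))) in *.
    assert (0 <= lam l1 l2 l3 (w (N + m)%nat) * Q * c0) by (repeat apply Rmult_le_pos; lra).
    assert (lam l1 l2 l3 (w (N + m)%nat) * Q * c0 <= markov_slack l1 l2 l3 * Q * c0)
      by (apply Rmult_le_compat_r; [lra|]; apply Rmult_le_compat_r; lra).
    assert (c0 ^ 2 <= c0 ^ 2 * Q) by nra.
    split; nra.
  - exists (delta / z0). apply is_lim_seq_incr_n with (N := N).
    assert (HPU : is_lim_seq (fun n => PU (N + n)%nat / INR n) z0).
    { replace z0 with (0 + z0) at 1 by ring.
      apply is_lim_seq_ext_loc with (u := fun n => PU N / INR n + z0).
      - exists 1%nat. intros n Hn. rewrite euclid_tail_linear. fold z0. field.
        apply not_0_INR. lia.
      - apply is_lim_seq_plus'; [apply lim_const_div_INR | apply is_lim_seq_const]. }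
    apply is_lim_seq_ext_loc with
      (u := fun n => (ln (P (N + n)%nat) / INR n) / (PU (N + n)%nat / INR n)).
    + exists 1%nat. intros n Hn. replace (n + N)%nat with (N + n)%nat by lia.
      pose proof (euclid_chain_ge w U0 m0 Hw Hm0 HU0 (S (N + n)) _ (Hw (N + n)%nat)).
      field. split; [lra | apply not_0_INR; lia].
    + apply is_lim_seq_div'; [exact Hdelta | exact HPU | lra].
Qed.

Lemma log_markov_ratio_lim_tail :
  exists q : R, forall j, (1 <= j <= 3)%nat -> j <> i ->
    is_lim_seq (fun n => ln (tcomp j (Mk n)) / tcomp j (U n)) q.
Proof.
  destruct newest_log_ratio_lim as [L HL]. exists L. intros j Hj Hji.
  apply (lim_of_lagged _ _ L HL). exists (N + 2)%nat. intros n Hn.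
  destruct n as [|n]; [lia|]. replace (S n - 1)%nat with n by lia.
  destruct (Nat.eq_dec j (w n)) as [->|Hjn]; [now left|right].
  destruct n as [|n]; [lia|]. replace (S (S n) - 2)%nat with n by lia.
  assert (Hjw : j = w n).
  { pose proof (tail_distinct n ltac:(lia)). unfold distinct3 in *. lia. }
  change (Mk (S (S n))) with (gmu l1 l2 l3 (w (S n)) (Mk (S n))).
  change (U (S (S n))) with (euclid (w (S n)) (U (S n))).
  rewrite gmu_other, euclid_other by assumption. rewrite Hjw. reflexivity.
Qed.

End OneIndexFinite.

Theorem theorem6p10 (l1 l2 l3 : nat) (a b c : R) (w : nat -> nat) :
  zero_initial a b c -> reduced_seq w ->
  ((forall i, (1 <= i <= 3)%nat -> appears_infinitely w i) ->
     exists q : R, forall j, (1 <= j <= 3)%nat ->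
       Un_cv (fun n => ln (tcomp j (markov_chain l1 l2 l3 w n))
                       / tcomp j (euclid_chain w (a, b, c) n)) q)
  /\
  (forall i, (1 <= i <= 3)%nat -> ~ appears_infinitely w i ->
     exists q : R, forall j, (1 <= j <= 3)%nat -> j <> i ->
       Un_cv (fun n => ln (tcomp j (markov_chain l1 l2 l3 w n))
                       / tcomp j (euclid_chain w (a, b, c) n)) q).
Proof.
  intros (Ha & Hb & Hc & _) [Hw Hr].
  set (m0 := min3 (fun p => tcomp p (a, b, c))).
  assert (HU0 : forall p, (1 <= p <= 3)%nat -> m0 <= tcomp p (a, b, c))
    by (intros p Hp; apply (min3_le_max3 (fun p => tcomp p (a, b, c))), Hp).
  assert (Hm0 : 0 < m0) by (unfold m0, min3; simpl; repeat apply Rmin_glb_lt; assumption).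
  split.
  - intros Happ.
    destruct (log_markov_ratio_lim l1 l2 l3 w (a, b, c) m0 Hw Hr Hm0 HU0 Happ) as [q Hq].
    exists q. intros j Hj. apply is_lim_seq_Reals, Hq, Hj.
  - intros i Hi Hfin.
    assert (HN : exists N, forall k, (N <= k)%nat -> w k <> i).
    { apply not_all_ex_not in Hfin as [N HN]. exists N. intros k Hk Hwk. apply HN. exists k. auto. }
    destruct HN as [N HN].
    destruct (log_markov_ratio_lim_tail l1 l2 l3 w (a, b, c) m0 i N Hw Hr Hm0 HU0 Hi HN) as [q Hq].
    exists q. intros j Hj Hji. apply is_lim_seq_Reals, Hq; assumption.
Qed.
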